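(* Let $X,Y,\hat X,\hat Y$ be Banach spaces and let $T\colon X\to Y$ and $\hat T\colon\hat X\to\hat Y$ be bounded linear operators such that $(X,Y,T)\equiv(\hat X,\hat Y,\hat T)$. Then $T$ is surjective if and only if $\hat T$ is surjective.
   Context: A Banach space $X$ is regarded as a many-sorted metric structure with one sort $B_X(r)$ for each nonnegative rational $r$ (the closed ball of radius $r$ about $0$), together with: the inclusion maps $B_X(r)\to B_X(s)$ for $r<s$; vector addition $B_X(r)\times B_X(s)\to B_X(r+s)$; for each $\lambda\in\mathbb{Q}$, multiplication by $\lambda$ as a map $B_X(r)\to B_X(|\lambda|r)$; the normalized norm predicate $\|x\|/r$ on $B_X(r)$; and the metric $d(x,y)=\|x-y\|/(2r)$ on $B_X(r)$. For a bounded operator $T\colon X\to Y$, the structure $(X,Y,T)$ consists of the structures of $X$ and $Y$ on disjoint sorts together with $T$ as the family of maps $B_X(r)\to B_Y(s)$ for $s\ge\|T\|r$. Finitary formulas are built from atomic formulas using the connectives $1-x$, $x/2$, $\min(x+y,1)$ (equivalently $\max(x-y,0)$) and the quantifiers $\inf_x,\sup_x$ over the sorts, with values in $[0,1]$. $M\equiv N$ means $\phi^M=\phi^N$ for every finitary sentence $\phi$ (in the common signature). *)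

From HB Require Import structures.
From mathcomp Require Import all_boot all_order all_algebra.
From mathcomp Require Import boolp classical_sets reals topology normedtype.
Set Implicit Arguments. Unset Strict Implicit. Unset Printing Implicit Defensive.
Import Order.TTheory GRing.Theory Num.Theory.
Local Open Scope ring_scope.
Local Open Scope classical_set_scope.

(* A sort is (side, r): side false = B_X(r), side true = B_Y(r), r : rat
   (well-formed sentences only use r >= 0, see [fwf]). *)
Definition sort := (bool * rat)%type.

Inductive term : sort -> Type :=
| tvar (s : sort) (n : nat) : term s
| tincl (b : bool) (r s : rat) : term (b, r) -> term (b, s)          (* needs r < s *)
| tadd (b : bool) (r s : rat) : term (b, r) -> term (b, s) -> term (b, r + s)
| tscal (b : bool) (l r : rat) : term (b, r) -> term (b, `|l| * r)
| tT (r s : rat) : term (false, r) -> term (true, s).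

Inductive formula : Type :=
| fnorm (s : sort) : term s -> formula
| fdist (s : sort) : term s -> term s -> formula
| fneg : formula -> formula
| fhalf : formula -> formula
| fplus : formula -> formula -> formula
| finf (b : bool) (r : rat) (n : nat) : formula -> formula
| fsup (b : bool) (r : rat) (n : nat) : formula -> formula.

Fixpoint twf (bound : seq (bool * rat * nat)) (s : sort) (t : term s) : bool :=
  match t with
  | tvar s n => (s.1, s.2, n) \in bound
  | tincl _ r s t => (r < s) && twf bound t
  | tadd _ _ _ t1 t2 => twf bound t1 && twf bound t2
  | tscal _ _ _ t => twf bound t
  | tT _ _ t => twf bound t
  end.

Fixpoint fwf (bound : seq (bool * rat * nat)) (phi : formula) : bool :=
  match phi with
  | fnorm _ t => twf bound t
  | fdist _ t1 t2 => twf bound t1 && twf bound t2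
  | fneg p => fwf bound p
  | fhalf p => fwf bound p
  | fplus p q => fwf bound p && fwf bound q
  | finf b r n p => (0 <= r) && fwf ((b, r, n) :: bound) p
  | fsup b r n p => (0 <= r) && fwf ((b, r, n) :: bound) p
  end.

Definition sentence (phi : formula) : bool := fwf [::] phi.

Section Semantics.
Variables (R : realType) (X Y : normedModType R) (T : X -> Y).

Definition carrier (b : bool) : normedModType R := if b then Y else X.

(* The T-symbol B_X(r) -> B_Y(s) belongs to the signature of (X,Y,T)
   iff T maps B_X(r) into B_Y(s), i.e. s >= ||T|| r. *)
Definition Tsym_ok (r s : rat) : Prop :=
  forall x : X, `|x| <= ratr r -> `|T x| <= ratr s.

Fixpoint tadm (s : sort) (t : term s) : Prop :=
  match t with
  | tvar _ _ => True
  | tincl _ _ _ t => tadm t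
  | tadd _ _ _ t1 t2 => tadm t1 /\ tadm t2
  | tscal _ _ _ t => tadm t
  | tT r s t => Tsym_ok r s /\ tadm t
  end.

Fixpoint fadm (phi : formula) : Prop :=
  match phi with
  | fnorm _ t => tadm t
  | fdist _ t1 t2 => tadm t1 /\ tadm t2
  | fneg p => fadm p
  | fhalf p => fadm p
  | fplus p q => fadm p /\ fadm q
  | finf _ _ _ p => fadm p
  | fsup _ _ _ p => fadm p
  end.

Definition venv (eX : rat -> nat -> X) (eY : rat -> nat -> Y) (s : sort) (n : nat)
  : carrier s.1 :=
  match s as s0 return carrier s0.1 with
  | (b, r) => match b as b0 return carrier b0 with
              | true => eY r n
              | false => eX r n
              end
  end.

Fixpoint teval (eX : rat -> nat -> X) (eY : rat -> nat -> Y) (s : sort) (t : term s)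
  : carrier s.1 :=
  match t in term s0 return carrier s0.1 with
  | tvar s n => venv eX eY s n
  | tincl _ _ _ t => teval eX eY t
  | tadd _ _ _ t1 t2 => teval eX eY t1 + teval eX eY t2
  | tscal _ l _ t => ratr l *: teval eX eY t
  | tT _ _ t => T (teval eX eY t)
  end.

Definition upd (V : Type) (e : rat -> nat -> V) (r : rat) (n : nat) (v : V) :=
  fun r' n' => if (r' == r) && (n' == n) then v else e r' n'.

Definition ball_of (V : normedModType R) (r : rat) : set V :=
  [set v : V | `|v| <= ratr r].

Arguments ball_of : clear implicits.

Fixpoint feval (eX : rat -> nat -> X) (eY : rat -> nat -> Y) (phi : formula) : R :=
  match phi with
  | fnorm s t => `|teval eX eY t| / ratr s.2
  | fdist s t1 t2 => `|teval eX eY t1 - teval eX eY t2| / (2 * ratr s.2)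
  | fneg p => 1 - feval eX eY p
  | fhalf p => feval eX eY p / 2
  | fplus p q => Num.min (feval eX eY p + feval eX eY q) 1
  | finf b r n p =>
      if b then inf [set feval eX (upd eY r n y) p | y in ball_of Y r]
      else inf [set feval (upd eX r n x) eY p | x in ball_of X r]
  | fsup b r n p =>
      if b then sup [set feval eX (upd eY r n y) p | y in ball_of Y r]
      else sup [set feval (upd eX r n x) eY p | x in ball_of X r]
  end.

(* Value of a sentence (the environment is irrelevant for sentences). *)
Definition sval (phi : formula) : R := feval (fun _ _ => 0) (fun _ _ => 0) phi.

End Semantics.

Definition elem_equiv (R : realType) (X Y Xh Yh : normedModType R)
  (T : X -> Y) (Th : Xh -> Yh) : Prop :=
  forall phi : formula, sentence phi -> fadm T phi -> fadm Th phi ->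
    sval T phi = sval Th phi.

From Pilot Require Import Defs.
From HB Require Import structures.
From mathcomp Require Import all_boot all_order all_algebra.
From mathcomp Require Import boolp classical_sets reals topology normedtype sequences.
Import Order.TTheory GRing.Theory Num.Theory.
Local Open Scope ring_scope.
Local Open Scope classical_set_scope.

(* By the open mapping theorem, a bounded operator T : X -> Y between Banach
   spaces is surjective iff for some c every point of the unit ball of Y is a
   limit of images of points of the c-ball of X.  For rational c this says
   exactly that the sentence sup_{y in B_Y(1)} inf_{x in B_X(c)} ||Tx - y||
   takes the value 0, and choosing the sort B_Y(s) of that distance large
   enough for both operators, the sentence belongs to the common signature of
   (X,Y,T) and (Xh,Yh,Th). *)

Definition almost_open (R : realType) (X Y : normedModType R) (T : X -> Y) (c : R) :=
  forall y : Y, `|y| <= 1 -> forall e, 0 < e ->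
    exists2 x : X, `|x| <= c & `|T x - y| < e.
Arguments almost_open {R X Y}.

Section AlmostOpen.
Variables (R : realType) (X Y : normedModType R).

Lemma almost_open_le (T : X -> Y) (c c' : R) :
  c <= c' -> almost_open T c -> almost_open T c'.
Proof.
move=> cc' Tc y y1 e e0; have [x xc Tx] := Tc y y1 e e0.
by exists x => //; exact: le_trans cc'.
Qed.

Lemma almost_open_half (T : {linear X -> Y}) (c : R) : almost_open T c ->
  forall y : Y, exists x : X, `|x| <= c * `|y| /\ `|T x - y| <= `|y| / 2.
Proof.
move=> Tc y; have [->|y0] := eqVneq y 0.
  by exists 0; rewrite linear0 subr0 !normr0 mulr0 mul0r.
have ny0 : 0 < `|y| by rewrite normr_gt0.
have [x xc Tx] : exists2 x : X, `|x| <= c & `|T x - `|y|^-1 *: y| < 2^-1.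
  apply: Tc; last by rewrite invr_gt0.
  by rewrite normrZ normfV normr_id mulVf ?gt_eqF.
exists (`|y| *: x); split; first by rewrite normrZ normr_id mulrC ler_wpM2r.
rewrite linearZ /= -{2}(scalerKV (lt0r_neq0 ny0) y) -scalerBr normrZ normr_id.
by rewrite ler_wpM2l // ltW.
Qed.

End AlmostOpen.

Lemma almost_open_surjective {R : realType} {X : completeNormedModType R}
    {Y : normedModType R} {T : {linear X -> Y}} {c : R} :
  continuous T -> 0 <= c -> almost_open T c -> forall y : Y, exists x : X, T x = y.
Proof.
move=> Tcont c0 /almost_open_half /choice [g Hg] y.
(* each correction g (r n) halves the residual r n, so the corrections are
   dominated by a geometric series *)
pose fix r n := if n is m.+1 then r m - T (g (r m)) else y.
pose u n := g (r n).
have r_geo n : `|r n| <= geometric `|y| 2^-1 n.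
  elim: n => [|n IH]; first by rewrite /= expr0 mulr1.
  rewrite /= -opprB normrN (le_trans (proj2 (Hg (r n)))) //.
  by rewrite exprSr mulrA ler_wpM2r // invr_ge0.
have u_geo n : `|u n| <= geometric (c * `|y|) 2^-1 n.
  by rewrite (le_trans (proj1 (Hg (r n)))) //= -mulrA ler_wpM2l.
have T_series n : T (series u n) = y - r n.
  elim: n => [|n IH]; first by rewrite /series /= big_geq // linear0 subrr.
  by rewrite seriesSr linearD IH /= opprB [RHS]addrCA [LHS]addrC.
have half_lt1 : `|2^-1 : R| < 1 by rewrite ger0_norm ?invr_ge0 // invf_lt1 // ltr1n.
have cvg_u : cvgn (series u).
  apply: normed_cvg; have := is_cvg_geometric_series (a := c * `|y|) half_lt1.
  apply: series_le_cvg => n //=.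
  by rewrite !mulr_ge0 // ?exprn_ge0 // invr_ge0.
have r_to0 : r @ \oo --> 0.
  apply/cvgr0Pnorm_lt => e e0.
  have := proj1 (@cvgr0Pnorm_lt R R^o nat \oo eventually_filter
    (geometric `|y| 2^-1)) (cvg_geometric _ half_lt1) e e0.
  by apply: filterS => n; apply: le_lt_trans; rewrite (le_trans (r_geo n)) ?ler_norm.
have T_to_y : (fun n => T (series u n)) @ \oo --> y.
  rewrite (funext T_series) -[X in _ --> X]subr0.
  by apply: cvgB => //; exact: cvg_cst.
have T_to_Tlim : (fun n => T (series u n)) @ \oo --> T (limn (series u)).
  by apply: continuous_cvg => //; exact: Tcont.
by exists (limn (series u)); exact: cvg_unique T_to_Tlim T_to_y.
Qed.

Lemma surjective_closure_image_ball (R : realType) (X : normedModType R)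
    (Y : completeNormedModType R) (T : X -> Y) :
  (forall y : Y, exists x : X, T x = y) ->
  exists (n : nat) (y0 : Y), exists2 d : R, 0 < d &
    ball y0 d `<=` closure (T @` [set x | `|x| <= n%:R]).
Proof.
move=> Tsurj; pose B (n : nat) := closure (T @` [set x : X | `|x| <= n%:R]).
have : ~ forall n, dense (~` B n).
  move=> dense_nB.
  have closed_B n : closed (B n) by exact: closed_closure.
  have [||y [_ nBy]] := @Baire R Y (fun n => ~` B n) (fun n => conj
    (closed_openC (closed_B n)) (dense_nB n)) setT; [by exists 0 | exact: openT|].
  have [x Txy] := Tsurj y; apply: (nBy (Num.truncn `|x|).+1 I); rewrite -Txy.
  by apply: subset_closure; exists x => //=; exact/ltW/truncnS_gt.
move=> /existsNP [n /existsNP [O /not_implyP [[y1 Oy1] /not_implyP [oO nBO]]]].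
have /open_nbhs_nbhs/nbhs_ballP [d d0 dO] : open_nbhs y1 O by [].
exists n, y1, d => // y /dO Oy; apply: contrapT => nBy; apply: nBO.
by exists y.
Qed.

Lemma closure_norm_approx {R : realType} {Y : normedModType R} {A : set Y}
    {y : Y} {e : R} :
  closure A y -> 0 < e -> exists2 a, A a & `|a - y| < e.
Proof.
move=> Ay e0; have [a [Aa]] := Ay _ (nbhsx_ballx y e e0).
by rewrite -ball_normE /= distrC => ?; exists a.
Qed.

Lemma surjective_almost_open (R : realType) (X Y : completeNormedModType R)
    (T : {linear X -> Y}) :
  (forall y : Y, exists x : X, T x = y) -> exists2 c : R, 0 <= c & almost_open T c.
Proof.
move=> /surjective_closure_image_ball [n [y1 [d d0 dB]]].
set h := d / 2; have h0 : 0 < h by rewrite divr_gt0.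
have hi0 : 0 <= h^-1 by rewrite invr_ge0 ltW.
exists (h^-1 * (n%:R + n%:R)); first by rewrite mulr_ge0 ?addr_ge0.
(* z = h^-1 ((y1 + h z) - y1), and both y1 + h z and y1 lie in the ball
   around y1 where images of the n-ball are dense *)
move=> z z1 e e0.
have y1hz : ball y1 d (y1 + h *: z).
  rewrite -ball_normE /= opprD addrA subrr add0r normrN normrZ gtr0_norm //.
  rewrite (@le_lt_trans _ _ h) //; first by rewrite ler_piMr // ltW.
  by rewrite /h ltr_pdivrMr // ltr_pMr // ltr1n.
have eh0 : 0 < e * h / 2 by rewrite !divr_gt0 // mulr_gt0.
have [_ [x1 x1n <-] Tx1] := closure_norm_approx (dB _ y1hz) eh0.
have [_ [x2 x2n <-] Tx2] := closure_norm_approx (dB _ (ballxx y1 d0)) eh0.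
exists (h^-1 *: (x1 - x2)).
  rewrite normrZ ger0_norm // ler_wpM2l //.
  by rewrite (le_trans (ler_normB _ _)) // lerD.
have -> : T (h^-1 *: (x1 - x2)) - z =
    h^-1 *: ((T x1 - (y1 + h *: z)) - (T x2 - y1)).
  rewrite linearZ linearB /= -{1}[z](scalerK (lt0r_neq0 h0)) -scalerBr.
  by rewrite opprB opprD (addrC y1) addrACA [- y1 - _ + _]addrAC addNr add0r.
rewrite normrZ ger0_norm // (le_lt_trans (ler_wpM2l hi0 (ler_normB _ _))) //.
have -> : e = h^-1 * (e * h / 2 + e * h / 2).
  by rewrite -splitr mulrC mulfK // lt0r_neq0.
by rewrite ltr_pM2l ?invr_gt0 // ltrD.
Qed.

Lemma Tsym_ok_bounded {R : realType} {X Y : normedModType R} {T : X -> Y}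
    {K : R} {r s : rat} :
  0 <= K -> (forall x, `|T x| <= K * `|x|) -> K * ratr r <= ratr s -> Tsym_ok T r s.
Proof.
move=> K0 TK Krs x xr; rewrite (le_trans (TK x)) // (le_trans _ Krs) //.
by rewrite ler_wpM2l.
Qed.

(* The sentence sup_{y in B_Y(1)} inf_{x in B_X(c)} ||T x - y|| / (2 s): the
   T-symbol B_X(c) -> B_Y(s) and the inclusion B_Y(1) -> B_Y(s) put both
   terms in the sort B_Y(s). *)
Definition almost_open_formula (c s : rat) : formula :=
  fsup true 1 0 (finf false c 0
    (@fdist (true, s) (@tT c s (@tvar (false, c) 0))
                      (@tincl true 1 s (@tvar (true, 1) 0)))).

Lemma almost_open_formula_sentence (c s : rat) :
  0 <= c -> 1 < s -> sentence (almost_open_formula c s).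
Proof. by move=> c0 s1; rewrite /sentence /= c0 s1 /= !inE !eqxx ?orbT. Qed.

Lemma fadm_almost_open_formula {R : realType} {X Y : normedModType R} {T : X -> Y}
    {c s : rat} :
  Tsym_ok T c s -> fadm T (almost_open_formula c s).
Proof. by []. Qed.

Lemma sval_almost_open_formula (R : realType) (X Y : normedModType R) (T : X -> Y)
    (c s : rat) :
  Defs.sval T (almost_open_formula c s) =
  sup [set inf [set `|T x - y| / (2 * ratr s) | x in ball_of c] | y in ball_of 1].
Proof.
rewrite /Defs.sval /=; congr sup; apply: eq_imagel => y _; congr inf.
by apply: eq_imagel => x _ /=; rewrite /upd !eqxx.
Qed.

Lemma sup_inf_ge0_eq0 (R : realType) (U V : Type) (A : set U) (B : set V)
    (F : U -> V -> R) (a0 : U) (M : R) :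
  A a0 -> B !=set0 -> (forall x y, 0 <= F x y) -> (forall y, B y -> F a0 y <= M) ->
  sup [set inf [set F x y | x in A] | y in B] = 0 <->
  forall y, B y -> forall e, 0 < e -> exists2 x, A x & F x y < e.
Proof.
move=> Aa0 [b0 Bb0] F0 FM.
have lbA y : has_lbound [set F x y | x in A] by exists 0 => _ [x _ <-].
have neA y : [set F x y | x in A] !=set0 by exists (F a0 y), a0.
have inf_ge0 y : 0 <= inf [set F x y | x in A].
  by apply: lb_le_inf => // _ [x _ <-].
have inf_le y x : A x -> inf [set F x y | x in A] <= F x y.
  by move=> Ax; apply: (ge_inf (lbA y)); exists x.
split=> [sup0 y By e e0 | small].
- have ubB : has_ubound [set inf [set F x y | x in A] | y in B].
    by exists M => _ [y' By' <-]; exact: le_trans (inf_le _ _ Aa0) (FM y' By').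
  have infe : inf [set F x y | x in A] < e.
    by rewrite (le_lt_trans _ e0) // -sup0; apply: (ub_le_sup ubB); exists y.
  by have [_ [x Ax <-] Fe] := inf_lt (neA y) infe; exists x.
- have inf0 y : B y -> inf [set F x y | x in A] = 0.
    move=> By; apply/eqP; rewrite eq_le inf_ge0 andbT.
    apply/ler_addgt0Pr => e e0; have [x Ax Fx] := small y By e e0.
    by rewrite add0r (le_trans (inf_le _ _ Ax)) ?ltW.
  suff -> : [set inf [set F x y | x in A] | y in B] = [set 0] by rewrite sup1.
  apply/seteqP; split => [_ [y By <-]|_ ->]; first exact: inf0.
  by exists b0 => //; rewrite inf0.
Qed.

Lemma sval_almost_open_formula_eq0 {R : realType} {X Y : normedModType R}
    (T : {linear X -> Y}) {c s : rat} : 0 <= c -> 0 < s ->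
  Defs.sval T (almost_open_formula c s) = 0 <-> almost_open T (ratr c).
Proof.
move=> c0 s0; have s2 : 0 < 2 * ratr s :> R by rewrite mulr_gt0 // ltr0q.
rewrite sval_almost_open_formula.
rewrite (@sup_inf_ge0_eq0 _ _ _ _ _ _ 0 (1 / (2 * ratr s))).
- rewrite /ball_of rmorph1; split=> Tc y y1 e e0.
  + have [x xc Txy] := Tc y y1 (e / (2 * ratr s)) (divr_gt0 e0 s2).
    by exists x => //; move: Txy; rewrite ltr_pM2r ?invr_gt0.
  + have [x xc Txy] := Tc y y1 (e * (2 * ratr s)) (mulr_gt0 e0 s2).
    by exists x => //; rewrite ltr_pdivrMr.
- by rewrite /ball_of /= normr0 ler0q.
- by exists 0; rewrite /ball_of /= normr0 rmorph1.
- by move=> x y; rewrite divr_ge0 // ltW.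
- move=> y; rewrite /ball_of /= rmorph1 linear0 sub0r normrN => y1.
  by rewrite ler_pM2r ?invr_gt0.
Qed.

Lemma elem_equiv_sym (R : realType) (X Y Xh Yh : normedModType R)
    (T : X -> Y) (Th : Xh -> Yh) :
  elem_equiv T Th -> elem_equiv Th T.
Proof. by move=> TTh phi phi_sent adm adm_h; rewrite TTh. Qed.

Lemma elem_equiv_surjective (R : realType) (X Y Xh Yh : completeNormedModType R)
    (T : {linear X -> Y}) (Th : {linear Xh -> Yh}) :
  continuous T -> continuous Th -> elem_equiv T Th ->
  (forall y : Y, exists x : X, T x = y) -> forall y : Yh, exists x : Xh, Th x = y.
Proof.
move=> Tcont Thcont TTh /surjective_almost_open [c0 c0_ge0 Tc0].
pose c : rat := (Num.truncn c0).+1%:R.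
have c_ge0 : 0 <= c by rewrite ler0n.
have Tc : almost_open T (ratr c).
  by rewrite ratr_nat; apply: almost_open_le Tc0; exact/ltW/truncnS_gt.
have /pinfty_ex_gt0 [K K0 [TK ThK]] : \forall K \near +oo,
    (forall x, `|T x| <= K * `|x|) /\ (forall x, `|Th x| <= K * `|x|).
  by apply: filterI; apply/linear_boundedP/linear_bounded_continuous.
pose s : rat := (Num.truncn (K * ratr c)).+2%:R.
have s_gt1 : 1 < s by rewrite ltr1n.
have Kcs : K * ratr c <= ratr s.
  by rewrite /s !ratr_nat (le_trans (ltW (truncnS_gt _))) // ler_nat.
apply: (almost_open_surjective (c := ratr c) Thcont); first by rewrite ler0q.
apply/(sval_almost_open_formula_eq0 _ c_ge0 (lt_trans ltr01 s_gt1)).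
rewrite -TTh; first exact/sval_almost_open_formula_eq0.
- exact: almost_open_formula_sentence.
- exact/fadm_almost_open_formula/(Tsym_ok_bounded (ltW K0) TK Kcs).
- exact/fadm_almost_open_formula/(Tsym_ok_bounded (ltW K0) ThK Kcs).
Qed.

Theorem proposition5p1 (R : realType) (X Y Xh Yh : completeNormedModType R)
  (T : {linear X -> Y}) (Th : {linear Xh -> Yh}) :
  continuous T -> continuous Th ->
  elem_equiv T Th ->
  ((forall y : Y, exists x : X, T x = y) <-> (forall y : Yh, exists x : Xh, Th x = y)).
Proof.
move=> Tcont Thcont TTh; split; first exact: elem_equiv_surjective.
by apply: elem_equiv_surjective => //; exact: elem_equiv_sym.
Qed.
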